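(* Let $G$ be a reaction network with one-dimensional stoichiometric subspace, $c^*\in\mathbb R^{s-1}$ a total-constant vector, $g(\kappa;c;x_1)$ and $q(\kappa;x_1)$ as below. If for a rate-constant vector $\kappa^*\in\mathbb R^m_{>0}$, $G$ has a positive steady state $x^*$ in $\mathcal P_{c^*}$, then $\frac{\partial g}{\partial x_1}(\kappa^*;c^*;x_1^* )$ has the same sign as $\frac{\partial q}{\partial x_1}(\kappa^*;x_1^* )$, and $x^*$ is stable if and only if $\frac{\partial q}{\partial x_1}(\kappa^*;x_1^* )<0$.
   Context: A reaction network $G$ has species $X_1,\dots,X_s$ and $m$ reactions $\sum_{i}\alpha_{ij}X_i\to\sum_i\beta_{ij}X_i$, $\alpha_{ij},\beta_{ij}\in\mathbb Z_{\ge0}$, $(\alpha_{1j},\dots,\alpha_{sj})\neq(\beta_{1j},\dots,\beta_{sj})$. $\mathcal N$ has entries $\beta_{ij}-\alpha_{ij}$, $S=\mathrm{im}\,\mathcal N$. For $\kappa\in\mathbb R^m_{>0}$, $f(\kappa;x)=\mathcal N(\kappa_1\prod_i x_i^{\alpha_{i1}},\dots,\kappa_m\prod_i x_i^{\alpha_{im}})^\top$. Since $S$ is one-dimensional, species are labelled so that $\beta_{11}-\alpha_{11}\ne0$, and there are $\lambda_j\ne0$ ($\lambda_1=1$) with $\beta_{ij}-\alpha_{ij}=\lambda_j(\beta_{i1}-\alpha_{i1})$. For $c\in\mathbb R^{s-1}$, $\mathcal P_c=\{x\in\mathbb R^s_{\ge0}:(\beta_{i1}-\alpha_{i1})x_1-(\beta_{11}-\alpha_{11})x_i=c_{i-1},\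 i=2,\dots,s\}$. A steady state is $x\ge0$ with $f(\kappa;x)=0$; positive if $x>0$; nondegenerate if $\mathrm{Jac}_f(x)(S)=S$; stable if nondegenerate and all nonzero eigenvalues of $\mathrm{Jac}_f(x)$ have negative real parts. $g(\kappa;c;x_1)=(\beta_{11}-\alpha_{11})\sum_{j=1}^m\lambda_j\kappa_jx_1^{\alpha_{1j}}\prod_{k=2}^s\big(\frac{\beta_{k1}-\alpha_{k1}}{\beta_{11}-\alpha_{11}}x_1-\frac{c_{k-1}}{\beta_{11}-\alpha_{11}}\big)^{\alpha_{kj}}$. Notation for $c^*$: $A_1=1,B_1=0$, $A_i=\frac{\beta_{i1}-\alpha_{i1}}{\beta_{11}-\alpha_{11}}$, $B_i=-\frac{c^*_{i-1}}{\beta_{11}-\alpha_{11}}$ ($i\ge2$). $[i]=\{k:A_k\ne0,B_k/A_k=B_i/A_i\}$ if $A_i\ne0$, $[i]=\{k:A_k=0\}$ otherwise; species labelled so that $1,\dots,r$ represent the $r$ distinct classes. $\varphi_k=\min_j\sum_{i\in[k]}\alpha_{ij}$, $\gamma_{kj}=\sum_{i\in[k]}\alpha_{ij}-\varphi_k$. $\mathcal J=\{i:A_i\neq0\}$, $\mathcal H=\{k\in\{1,\dots,r\}\cap\mathcal J:\gamma_{k1},\dots,\gamma_{km}\text{ not all equal}\}$. $Y_i(x_1)=(A_ix_1+B_i)/|A_i|$ if $i\in\mathcal J$, $Y_i=1$ otherwise; $\mathcal C_j=\prod_{i\in\mathcal J}|A_i|^{\alpha_{ij}}\prod_{i\notin\mathcal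 J}B_i^{\alpha_{ij}}$; $q(\kappa;x_1)=(\beta_{11}-\alpha_{11})\sum_{j=1}^m\lambda_j\kappa_j\mathcal C_j\prod_{k\in\mathcal H}Y_k(x_1)^{\gamma_{kj}}$. *)

From HB Require Import structures.
From mathcomp Require Import all_boot all_order all_algebra.
From mathcomp Require Import all_classical all_reals all_analysis.
From mathcomp Require Import complex.

Set Implicit Arguments.
Unset Strict Implicit.
Unset Printing Implicit Defensive.

Import Order.TTheory GRing.Theory Num.Theory.
Local Open Scope ring_scope.
Local Open Scope classical_set_scope.

(* Conventions: there are s.+1 species, indexed by 'I_s.+1 (species X_1 of the
   paper is ord0, species X_i, i >= 2, is lift ord0 k for k : 'I_s), and m.+1
   reactions indexed by 'I_m.+1 (reaction 1 of the paper is ord0).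
   alpha i j, beta i j : nat are the stoichiometric coefficients.
   A total-constant vector c in R^(s-1) is c : 'I_s -> R, c k = c_{k+1}
   (indexing the species lift ord0 k). *)

Section ReactionNetwork.
Variables (R : realType) (s m : nat).
Variables (alpha beta : 'I_s.+1 -> 'I_m.+1 -> nat).

Definition stoich : 'M[R]_(s.+1, m.+1) :=
  \matrix_(i, j) ((beta i j)%:R - (alpha i j)%:R).

Definition stoich_space : set 'cV[R]_s.+1 :=
  [set v | exists w : 'cV[R]_m.+1, v = stoich *m w].

Definition fvec (kappa : 'I_m.+1 -> R) (x : 'I_s.+1 -> R) (i : 'I_s.+1) : R :=
  \sum_(j < m.+1) stoich i j * (kappa j * \prod_(l < s.+1) x l ^+ alpha l j).

Definition upd (x : 'I_s.+1 -> R) (k : 'I_s.+1) (t : R) : 'I_s.+1 -> R :=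
  fun l => if l == k then t else x l.

Definition jac (kappa : 'I_m.+1 -> R) (x : 'I_s.+1 -> R) : 'M[R]_s.+1 :=
  \matrix_(i, k) derive1 (fun t => fvec kappa (upd x k t) i) (x k).

Definition steady_state (kappa : 'I_m.+1 -> R) (x : 'I_s.+1 -> R) : Prop :=
  (forall i, 0 <= x i) /\ (forall i, fvec kappa x i = 0).

Definition positive (x : 'I_s.+1 -> R) : Prop := forall i, 0 < x i.

Definition nondegenerate (kappa : 'I_m.+1 -> R) (x : 'I_s.+1 -> R) : Prop :=
  [set jac kappa x *m v | v in stoich_space] = stoich_space.

Definition stable (kappa : 'I_m.+1 -> R) (x : 'I_s.+1 -> R) : Prop :=
  nondegenerate kappa x /\
  forall z : R[i],
    eigenvalue (map_mx (fun r : R => (r%:C)%C) (jac kappa x)) z ->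
    z != 0 -> Re z < 0.

Definition in_Pc (c : 'I_s -> R) (x : 'I_s.+1 -> R) : Prop :=
  (forall i, 0 <= x i) /\
  forall k : 'I_s,
    stoich (lift ord0 k) ord0 * x ord0 - stoich ord0 ord0 * x (lift ord0 k) = c k.

Definition gfun (lambda : 'I_m.+1 -> R) (kappa : 'I_m.+1 -> R) (c : 'I_s -> R)
  (x1 : R) : R :=
  stoich ord0 ord0 *
  \sum_(j < m.+1) lambda j * kappa j * x1 ^+ alpha ord0 j *
     \prod_(k < s) (stoich (lift ord0 k) ord0 / stoich ord0 ord0 * x1
                    - c k / stoich ord0 ord0) ^+ alpha (lift ord0 k) j.

Definition Acoef (i : 'I_s.+1) : R :=
  match unlift ord0 i with
  | None => 1
  | Some k => stoich (lift ord0 k) ord0 / stoich ord0 ord0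
  end.

Definition Bcoef (c : 'I_s -> R) (i : 'I_s.+1) : R :=
  match unlift ord0 i with
  | None => 0
  | Some k => - (c k / stoich ord0 ord0)
  end.

Definition cls (c : 'I_s -> R) (i k : 'I_s.+1) : bool :=
  if Acoef i != 0 then
    (Acoef k != 0) && (Bcoef c k / Acoef k == Bcoef c i / Acoef i)
  else Acoef k == 0.

Definition clsum (c : 'I_s -> R) (k : 'I_s.+1) (j : 'I_m.+1) : nat :=
  (\sum_(i < s.+1 | cls c k i) alpha i j)%N.

Definition phi (c : 'I_s -> R) (k : 'I_s.+1) : nat :=
  \big[minn/clsum c k ord0]_(j < m.+1) clsum c k j.

Definition gamma (c : 'I_s -> R) (k : 'I_s.+1) (j : 'I_m.+1) : nat :=
  (clsum c k j - phi c k)%N.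

Definition inJ (i : 'I_s.+1) : bool := Acoef i != 0.

Definition inH (c : 'I_s -> R) (r : nat) (k : 'I_s.+1) : bool :=
  [&& (k < r)%N, inJ k & [exists j, exists j', gamma c k j != gamma c k j']].

Definition Yfun (c : 'I_s -> R) (i : 'I_s.+1) (x1 : R) : R :=
  if inJ i then (Acoef i * x1 + Bcoef c i) / `|Acoef i| else 1.

Definition Ccoef (c : 'I_s -> R) (j : 'I_m.+1) : R :=
  (\prod_(i < s.+1 | inJ i) `|Acoef i| ^+ alpha i j) *
  (\prod_(i < s.+1 | ~~ inJ i) Bcoef c i ^+ alpha i j).

Definition qfun (lambda : 'I_m.+1 -> R) (c : 'I_s -> R) (r : nat)
  (kappa : 'I_m.+1 -> R) (x1 : R) : R :=
  stoich ord0 ord0 *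
  \sum_(j < m.+1) lambda j * kappa j * Ccoef c j *
     \prod_(k < s.+1 | inH c r k) Yfun c k x1 ^+ gamma c k j.

End ReactionNetwork.

(* Because N has rank one, so does the Jacobian: Jac_f(x) = v w^T with v the
   first column of N.  Hence x is nondegenerate iff the trace w.v is nonzero,
   and stable iff w.v < 0, w.v being the only possibly nonzero eigenvalue.
   On P_c every x_i is the affine function A_i x_1 + B_i, so g(x_1) is f_1
   along P_c and the chain rule identifies w.v with g'(x*_1).
   Affine factors whose roots coincide (the classes [k]) are positive
   multiples of a single Y_k, since all of them are positive at x*_1; pulling
   out the common powers Y_k^phi_k writes g = P q with P(x*_1) > 0.  Since
   g(x*_1) is f_1 at the steady state x*, it vanishes, so q(x*_1) = 0 and
   g'(x*_1) = P(x*_1) q'(x*_1). *)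

From Pilot Require Import Defs.
From HB Require Import structures.
From mathcomp Require Import all_boot all_order all_algebra.
From mathcomp Require Import all_classical all_reals all_analysis.
From mathcomp Require Import complex.
From mathcomp Require Import ring.

Set Implicit Arguments.
Unset Strict Implicit.
Unset Printing Implicit Defensive.

Import Order.TTheory GRing.Theory Num.Theory.
Local Open Scope ring_scope.

Lemma horner_deriv_prod (R : fieldType) (I : Type) (r : seq I) (F : I -> {poly R}) t :
  (forall i, (F i).[t] != 0) ->
  (\prod_(i <- r) F i)^`().[t] =
  (\prod_(i <- r) F i).[t] * \sum_(i <- r) (F i)^`().[t] / (F i).[t].
Proof.
move=> Fn0; elim: r => [|a r IH]; first by rewrite !big_nil derivC !hornerE ?mulr0.
rewrite !big_cons derivM !hornerE IH mulrDr; have := Fn0 a => Fan0.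
by congr (_ + _); [field | rewrite mulrA].
Qed.

Lemma horner_deriv_prodX (R : fieldType) (I : Type) (r : seq I) (p : I -> {poly R})
    (n : I -> nat) t :
  (forall i, (p i).[t] != 0) ->
  (\prod_(i <- r) p i ^+ n i)^`().[t] =
  (\prod_(i <- r) p i ^+ n i).[t] * \sum_(i <- r) (n i)%:R * (p i)^`().[t] / (p i).[t].
Proof.
move=> pn0; rewrite horner_deriv_prod => [|i]; last by rewrite horner_exp expf_neq0.
congr (_ * _); apply: eq_bigr => i _.
rewrite deriv_exp hornerMn hornerM !horner_exp.
have := pn0 i; case: (n i) => [|k] pin0 /=; first by rewrite mulr0n !mul0r.
have pkn0 : (p i).[t] ^+ k != 0 by rewrite expf_neq0.
by rewrite exprS -mulr_natr; field; rewrite pkn0 pin0.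
Qed.

Lemma horner_prodX (R : comNzRingType) (I : Type) (r : seq I) (P : pred I)
    (p : I -> {poly R}) (n : I -> nat) t :
  (\prod_(i <- r | P i) p i ^+ n i).[t] = \prod_(i <- r | P i) (p i).[t] ^+ n i.
Proof. by rewrite horner_prod; apply: eq_bigr => i _; rewrite horner_exp. Qed.

Section RankOneMatrix.
Variables (R : rcfType) (n : nat) (v w : 'I_n -> R).

Let M : 'M[R]_n := \matrix_(i, k) (v i * w k).
Let M_C := map_mx (fun r : R => (r%:C)%C) M.

Lemma rank1_eigenvalueE (z : R[i]) :
  eigenvalue M_C z -> z != 0 -> z = ((\sum_k v k * w k)%:C)%C.
Proof.
move=> /eigenvalueP [u Hu un0] zn0.
pose mu := \sum_i u 0 i * (v i)%:C%C.
have Hmu k : mu * (w k)%:C%C = z * u 0 k.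
  have := congr1 (fun N : 'rV_n => N 0 k) Hu; rewrite !mxE => <-.
  rewrite /mu mulr_suml; apply: eq_bigr => i _; rewrite !mxE rmorphM /=; ring.
have mun0 : mu != 0.
  apply: contraNneq un0 => mu0; apply/eqP/rowP => k; rewrite mxE.
  by have /esym/eqP := Hmu k; rewrite mu0 mul0r mulf_eq0 (negPf zn0) => /eqP.
suff : z * mu = mu * (\sum_k v k * w k)%:C%C by rewrite [RHS]mulrC => /(mulIf mun0).
rewrite {1}/mu mulr_sumr rmorph_sum mulr_sumr; apply: eq_bigr => k _.
by rewrite mulrA -Hmu rmorphM /=; ring.
Qed.

Lemma rank1_eigenvalue_trace :
  \sum_k v k * w k != 0 -> eigenvalue M_C ((\sum_k v k * w k)%:C)%C.
Proof.
move=> Dn0; apply/eigenvalueP; exists (\row_k (w k)%:C)%C.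
  apply/rowP => k; rewrite !mxE rmorph_sum mulr_suml; apply: eq_bigr => i _.
  by rewrite !mxE !rmorphM /=; ring.
apply: contra_neq Dn0 => /rowP w0; rewrite big1 // => k _.
by have := w0 k; rewrite !mxE => /(congr1 (@complex.Re R)) /= ->; rewrite mulr0.
Qed.

End RankOneMatrix.

Section RankOneStability.
Variables (R : realType) (s m : nat) (alpha beta : 'I_s.+1 -> 'I_m.+1 -> nat).
Variables (lambda : 'I_m.+1 -> R) (v : 'I_s.+1 -> R).
Hypothesis lambda0_neq0 : lambda ord0 != 0.
Hypothesis stoich_rank1 : forall i j, stoich R alpha beta i j = lambda j * v i.

Lemma stoich_spaceP y :
  stoich_space alpha beta y <-> exists c, y = c *: \col_i v i.
Proof.
split=> [[u ->]|[c ->]].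
  exists (\sum_j lambda j * u j 0); apply/matrixP => i k.
  rewrite !mxE mulr_suml; apply: eq_bigr => j _.
  by rewrite stoich_rank1 (ord1 k) mulrAC.
exists (\col_j (if j == ord0 then c / lambda ord0 else 0)).
apply/matrixP => i k; rewrite !mxE (bigD1 ord0) //= big1 => [|j /negPf j_neq0].
  by rewrite stoich_rank1 !mxE eqxx addr0; field.
by rewrite !mxE j_neq0 mulr0.
Qed.

Variables (kappa : 'I_m.+1 -> R) (x : 'I_s.+1 -> R) (w : 'I_s.+1 -> R).
Hypothesis v0_neq0 : v ord0 != 0.
Hypothesis jac_rank1 : forall i k, jac alpha beta kappa x i k = v i * w k.

Let jacE : jac alpha beta kappa x = \matrix_(i, k) (v i * w k).
Proof. by apply/matrixP => i k; rewrite jac_rank1 mxE. Qed.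

Let jac_col c :
  jac alpha beta kappa x *m (c *: \col_i v i)
  = (c * \sum_k v k * w k) *: \col_i v i.
Proof.
rewrite jacE; apply/matrixP => i k; rewrite !mxE mulr_sumr mulr_suml.
by apply: eq_bigr => j _; rewrite !mxE; ring.
Qed.

Lemma nondegenerate_rank1 :
  Defs.nondegenerate alpha beta kappa x <-> \sum_k v k * w k != 0.
Proof.
split=> [nondeg | Dn0].
  apply/eqP => D0.
  have : stoich_space alpha beta (\col_i v i).
    by apply/stoich_spaceP; exists 1; rewrite scale1r.
  rewrite -nondeg => -[_ /stoich_spaceP [c ->]]; rewrite jac_col D0 mulr0 scale0r.
  by move=> /matrixP /(_ ord0 ord0); rewrite !mxE => /esym/eqP; rewrite (negPf v0_neq0).
apply/seteqP; split=> y.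
  case=> _ /stoich_spaceP [c ->] <-; apply/stoich_spaceP.
  by exists (c * \sum_k v k * w k).
move/stoich_spaceP => [c ->]; exists ((c / \sum_k v k * w k) *: \col_i v i).
  by apply/stoich_spaceP; exists (c / \sum_k v k * w k).
by rewrite jac_col divfK.
Qed.

Lemma stable_rank1 : stable alpha beta kappa x <-> \sum_k v k * w k < 0.
Proof.
have ReC (k : R) : 'Re (k%:C)%C = (k%:C)%C.
  by apply/Creal_ReP/complex_realP; exists k.
rewrite /stable nondegenerate_rank1 jacE.
split=> [[Dn0 eig_neg] | Dlt0].
  have := eig_neg _ (@rank1_eigenvalue_trace _ _ v w Dn0).
  by rewrite ReC ltcR; apply; rewrite eq_complex /= negb_and Dn0.
split=> [|z /rank1_eigenvalueE eqz /[dup] /eqz -> _]; first by rewrite ltr0_neq0.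
by rewrite ReC ltcR.
Qed.

End RankOneStability.

Section AffineParametrization.
Variables (R : realType) (s m : nat) (alpha beta : 'I_s.+1 -> 'I_m.+1 -> nat).
Variables (lambda : 'I_m.+1 -> R) (kappa : 'I_m.+1 -> R).
Hypothesis stoich_lambda :
  forall i j, stoich R alpha beta i j = lambda j * stoich R alpha beta i ord0.

Local Notation N := (stoich R alpha beta).
Local Notation A := (Acoef R alpha beta).

Definition rate (x : 'I_s.+1 -> R) (j : 'I_m.+1) : R :=
  kappa j * \prod_l x l ^+ alpha l j.

Definition rate_grad (x : 'I_s.+1 -> R) (k : 'I_s.+1) : R :=
  \sum_j lambda j * rate x j * ((alpha k j)%:R / x k).

Lemma jac_rank1E x i k : (forall l, x l != 0) ->
  jac alpha beta kappa x i k = N i ord0 * rate_grad x k.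
Proof.
move=> x_neq0; rewrite /jac mxE.
pose p l : {poly R} := if l == k then 'X else (x l)%:P.
have p_x l : (p l).[x k] = x l.
  by rewrite /p; case: eqP => [->|_]; rewrite ?hornerX ?hornerC.
have -> : (fun t => fvec alpha beta kappa (upd x k t) i)
    = horner (\sum_j (N i j * kappa j) *: \prod_l p l ^+ alpha l j).
  apply/funext => t; rewrite horner_sum; apply: eq_bigr => j _.
  rewrite hornerZ horner_prod -mulrA; congr (_ * (_ * _)); apply: eq_bigr => l _.
  by rewrite horner_exp /upd /p; case: eqP => _; rewrite ?hornerX ?hornerC.
rewrite -derivE linear_sum horner_sum /rate_grad mulr_sumr; apply: eq_bigr => j _.
rewrite linearZ /= hornerZ horner_deriv_prodX => [|l]; last by rewrite p_x.
rewrite horner_prod (eq_bigr (fun l => x l ^+ alpha l j)) => [|l _]; last first.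
  by rewrite horner_exp p_x.
have -> : \sum_l (alpha l j)%:R * (p l)^`().[x k] / (p l).[x k] = (alpha k j)%:R / x k.
  rewrite (bigD1 k) //= big1 => [|l /negPf l_neq_k]; last first.
    by rewrite /p l_neq_k derivC horner0 mulr0 mul0r.
  by rewrite p_x /p eqxx derivX hornerC mulr1 addr0.
by rewrite /rate stoich_lambda; ring.
Qed.

Variable c : 'I_s -> R.
Local Notation B := (Bcoef alpha beta c).

Lemma Acoef0 : A ord0 = 1. Proof. by rewrite /Acoef unlift_none. Qed.
Lemma Bcoef0 : B ord0 = 0. Proof. by rewrite /Bcoef unlift_none. Qed.

Hypothesis N00_neq0 : N ord0 ord0 != 0.

Lemma stoich_col0E i : N i ord0 = N ord0 ord0 * A i.
Proof.
case: (unliftP ord0 i) => [k ->|->]; last by rewrite Acoef0 mulr1.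
by rewrite /Acoef liftK; field.
Qed.

Lemma in_Pc_affine x : in_Pc alpha beta c x -> forall i, x i = A i * x ord0 + B i.
Proof.
move=> [_ Pc] i; case: (unliftP ord0 i) => [k ->|->]; last first.
  by rewrite Acoef0 Bcoef0 mul1r addr0.
by rewrite /Acoef /Bcoef liftK -(Pc k); field.
Qed.

Lemma gfunE t : gfun alpha beta lambda kappa c t
  = N ord0 ord0 * \sum_j lambda j * kappa j * \prod_i (A i * t + B i) ^+ alpha i j.
Proof.
congr (_ * _); apply: eq_bigr => j _; rewrite big_ord_recl [RHS]mulrA.
congr (_ * _); first by rewrite Acoef0 Bcoef0 mul1r addr0.
by apply: eq_bigr => k _; rewrite /Acoef /Bcoef liftK.
Qed.

Lemma gfun_fvec x : in_Pc alpha beta c x ->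
  gfun alpha beta lambda kappa c (x ord0) = fvec alpha beta kappa x ord0.
Proof.
move=> /in_Pc_affine xE; rewrite gfunE /fvec mulr_sumr; apply: eq_bigr => j _.
rewrite [N ord0 j]stoich_lambda (eq_bigr (fun i => x i ^+ alpha i j)) => [|i _].
  by ring.
by rewrite -xE.
Qed.

Lemma derive1_gfun x : in_Pc alpha beta c x -> (forall i, x i != 0) ->
  derive1 (gfun alpha beta lambda kappa c) (x ord0)
  = \sum_k N k ord0 * rate_grad x k.
Proof.
move=> /in_Pc_affine xE x_neq0.
pose L i : {poly R} := A i *: 'X + (B i)%:P.
have L_t i t : (L i).[t] = A i * t + B i.
  by rewrite /L hornerD hornerZ hornerX hornerC.
have -> : gfun alpha beta lambda kappa c
    = horner (N ord0 ord0 *: \sum_j (lambda j * kappa j) *: \prod_i L i ^+ alpha i j).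
  apply/funext => t; rewrite gfunE hornerZ horner_sum; congr (_ * _).
  apply: eq_bigr => j _; rewrite hornerZ horner_prod; congr (_ * _).
  by apply: eq_bigr => i _; rewrite horner_exp L_t.
rewrite -derivE linearZ /= hornerZ linear_sum horner_sum.
under [RHS]eq_bigr => k _ do rewrite /rate_grad mulr_sumr.
rewrite exchange_big /= mulr_sumr; apply: eq_bigr => j _.
rewrite linearZ /= hornerZ horner_deriv_prodX => [|i]; last by rewrite L_t -xE.
rewrite horner_prod (eq_bigr (fun i => x i ^+ alpha i j)) => [|i _]; last first.
  by rewrite horner_exp L_t -xE.
rewrite !mulr_sumr; apply: eq_bigr => i _.
rewrite /L derivD derivZ derivX derivC addr0 hornerZ hornerC mulr1 L_t -xE.
by rewrite [N i ord0]stoich_col0E /rate; ring.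
Qed.

Lemma stable_iff_derive1_gfun x :
  lambda ord0 != 0 -> in_Pc alpha beta c x -> (forall i, x i != 0) ->
  stable alpha beta kappa x <-> derive1 (gfun alpha beta lambda kappa c) (x ord0) < 0.
Proof.
move=> lambda0_neq0 Pc_x x_neq0; rewrite derive1_gfun //.
apply: (@stable_rank1 _ _ _ _ _ lambda (fun i => N i ord0)) => // i k.
exact: jac_rank1E.
Qed.

End AffineParametrization.

Section SpeciesClasses.
Variables (R : realType) (s m : nat) (alpha beta : 'I_s.+1 -> 'I_m.+1 -> nat).
Variables (c : 'I_s -> R) (r : nat).

Local Notation N := (stoich R alpha beta).
Local Notation A := (Acoef R alpha beta).
Local Notation B := (Bcoef alpha beta c).
Local Notation cls := (cls alpha beta c).
Local Notation inJ := (inJ R alpha beta).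
Local Notation clsum := (clsum alpha beta c).
Local Notation phi := (phi alpha beta c).
Local Notation gamma := (gamma alpha beta c).
Local Notation Ccoef := (Ccoef alpha beta c).
Local Notation inH := (inH alpha beta c r).

Lemma cls_common p k i : cls p i -> cls k i -> cls p k.
Proof.
rewrite /cls; case: (eqVneq (A p) 0) => [->|Ap]; case: (eqVneq (A k) 0) => [->|Ak];
  case: (eqVneq (A i) 0) => [->|Ai] //=; rewrite ?eqxx ?Ap ?Ak ?Ai //=.
by move=> /eqP <- /eqP <-.
Qed.

Lemma cls_inJ k i : cls k i -> inJ k = inJ i.
Proof.
rewrite /cls /inJ; case: (eqVneq (A k) 0) => [->|Ak] /=.
  by move=> /eqP ->; rewrite eqxx.
by move=> /andP [-> _].
Qed.

Hypothesis rep_distinct : forall i k : 'I_s.+1, (i < r)%N -> (k < r)%N -> i != k ->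
  ~~ cls i k.
Hypothesis rep_cover : forall k : 'I_s.+1, exists i : 'I_s.+1, (i < r)%N /\ cls i k.

Definition rep (i : 'I_s.+1) : 'I_s.+1 :=
  odflt ord0 [pick k : 'I_s.+1 | (k < r)%N && cls k i].

Lemma repP i : (rep i < r)%N && cls (rep i) i.
Proof.
rewrite /rep; case: pickP => [k //|no_rep] /=.
by have [k [k_lt_r cls_ki]] := rep_cover i; have := no_rep k; rewrite k_lt_r cls_ki.
Qed.

Lemma rep_uniq (i k : 'I_s.+1) : (k < r)%N -> cls k i -> rep i = k.
Proof.
move=> k_lt_r cls_ki; have /andP [rep_lt_r cls_rep] := repP i; apply/eqP.
by apply: contraTT (cls_common cls_rep cls_ki); exact: rep_distinct.
Qed.

Definition Ypoly (k : 'I_s.+1) : {poly R} :=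
  if inJ k then (A k / `|A k|) *: 'X + (B k / `|A k|)%:P else 1.

Lemma Yfun_Ypoly k t : Yfun alpha beta c k t = (Ypoly k).[t].
Proof.
rewrite /Yfun /Ypoly; case: ifP => _; rewrite ?hornerC //.
by rewrite hornerD hornerZ hornerX hornerC mulrDl mulrAC.
Qed.

Definition cls_factor : {poly R} :=
  \prod_(k : 'I_s.+1 | (k < r)%N && inJ k) Ypoly k ^+ phi k.

Definition qpoly (lambda kappa : 'I_m.+1 -> R) : {poly R} :=
  N ord0 ord0 *: \sum_j (lambda j * kappa j * Ccoef j) *:
    \prod_(k | inH k) Ypoly k ^+ gamma k j.

Lemma qfunE lambda kappa : qfun alpha beta lambda c r kappa = horner (qpoly lambda kappa).
Proof.
apply/funext => t; rewrite /qfun /qpoly hornerZ horner_sum; congr (_ * _).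
apply: eq_bigr => j _; rewrite hornerZ horner_prodX; congr (_ * _).
by apply: eq_bigr => k _; rewrite Yfun_Ypoly.
Qed.

Lemma phi_le_clsum k j : (phi k <= clsum k j)%N.
Proof. by rewrite /phi -minEnat; exact: (bigmin_le (T := nat)). Qed.

Lemma phi_attained k : exists j, phi k = clsum k j.
Proof.
rewrite /phi; apply: (big_ind (fun y => exists j, y = clsum k j)).
- by exists ord0.
- move=> _ _ [j1 ->] [j2 ->].
  case: (leqP (clsum k j1) (clsum k j2)).
    by exists j1.
  by exists j2.
- by move=> j _; exists j.
Qed.

Lemma clsum_phi_gamma k j : clsum k j = (phi k + gamma k j)%N.
Proof. by rewrite /gamma subnKC ?phi_le_clsum. Qed.

Lemma gamma_const0 k j :
  ~~ [exists j, exists j', gamma k j != gamma k j'] -> gamma k j = 0%N.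
Proof.
move=> const; have [j0 phiE] := phi_attained k.
apply/eqP; apply: contraNT const => gamma_neq0; apply/existsP; exists j.
by apply/existsP; exists j0; rewrite /gamma -phiE subnn.
Qed.

Variable x1 : R.
Hypothesis affine_gt0 : forall i, 0 < A i * x1 + B i.

Lemma affine_rep i t : inJ i -> A i * t + B i = `|A i| * (Ypoly (rep i)).[t].
Proof.
move=> Ji; have /andP [_ cls_ki] := repP i; set k := rep i in cls_ki *.
have Jk : inJ k by rewrite (cls_inJ cls_ki).
have Ai : A i != 0 := Ji.
have Ak : A k != 0 := Jk.
have Bi : B i = A i * (B k / A k).
  by move: cls_ki; rewrite /cls Ak => /andP [_ /eqP <-]; field.
have Ak_x1 : A k * x1 + B k != 0 by rewrite gt_eqF ?affine_gt0.
have ratio_gt0 : 0 < A i / A k.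
  have -> : A i / A k = (A i * x1 + B i) / (A k * x1 + B k).
    by rewrite Bi; field; rewrite Ak Ak_x1.
  by rewrite divr_gt0 ?affine_gt0.
have absAi : `|A i| = A i / A k * `|A k|.
  by rewrite -{1}(divfK Ak (A i)) normrM (gtr0_norm ratio_gt0).
rewrite /Ypoly Jk hornerD hornerZ hornerX hornerC absAi Bi.
by field; rewrite normr_eq0 Ak.
Qed.

Lemma prod_affine_classes j t :
  \prod_i (A i * t + B i) ^+ alpha i j
  = Ccoef j * \prod_(k : 'I_s.+1 | (k < r)%N && inJ k) (Ypoly k).[t] ^+ clsum k j.
Proof.
have notJ : \prod_(i | ~~ inJ i) (A i * t + B i) ^+ alpha i j
    = \prod_(i | ~~ inJ i) B i ^+ alpha i j.
  by apply: eq_bigr => i /negbNE /eqP ->; rewrite mul0r add0r.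
have inJ_split : \prod_(i | inJ i) (A i * t + B i) ^+ alpha i j
    = (\prod_(i | inJ i) `|A i| ^+ alpha i j) *
      \prod_(i | inJ i) (Ypoly (rep i)).[t] ^+ alpha i j.
  by rewrite -big_split; apply: eq_bigr => i Ji /=; rewrite affine_rep // exprMn.
have regroup : \prod_(i | inJ i) (Ypoly (rep i)).[t] ^+ alpha i j
    = \prod_(k : 'I_s.+1 | (k < r)%N && inJ k) (Ypoly k).[t] ^+ clsum k j.
  rewrite (partition_big rep (fun k => (k < r)%N && inJ k)) /=; last first.
    by move=> i Ji; have /andP [-> cls_rep] := repP i; rewrite (cls_inJ cls_rep).
  apply: eq_bigr => k /andP [k_lt_r Jk].
  rewrite (eq_bigr (fun i => (Ypoly k).[t] ^+ alpha i j)) => [|i /andP [_ /eqP ->]] //.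
  rewrite prodrXr /clsum; congr (_ ^+ _); apply: eq_bigl => i.
  apply/idP/idP => [/andP [_ /eqP <-]|cls_ki]; first by have /andP [_ ->] := repP i.
  by rewrite -(cls_inJ cls_ki) Jk (rep_uniq k_lt_r cls_ki) eqxx.
by rewrite (bigID inJ) /= notJ inJ_split regroup /Ccoef; ring.
Qed.

Lemma gfun_factor lambda kappa t :
  gfun alpha beta lambda kappa c t = cls_factor.[t] * (qpoly lambda kappa).[t].
Proof.
rewrite gfunE /qpoly hornerZ mulrCA; congr (_ * _).
rewrite horner_sum mulr_sumr; apply: eq_bigr => j _.
rewrite hornerZ horner_prodX prod_affine_classes /cls_factor horner_prodX.
rewrite (eq_bigr (fun k => (Ypoly k).[t] ^+ phi k *
                          (Ypoly k).[t] ^+ gamma k j)) => [|k _]; last first.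
  by rewrite -exprD -clsum_phi_gamma.
rewrite big_split /=.
have -> : \prod_(k : 'I_s.+1 | (k < r)%N && inJ k) (Ypoly k).[t] ^+ gamma k j
    = \prod_(k | inH k) (Ypoly k).[t] ^+ gamma k j.
  rewrite (bigID (fun k => [exists j, exists j', gamma k j != gamma k j'])) /=.
  rewrite [X in _ * X]big1 ?mulr1 => [|k /andP [_ const]]; last first.
    by rewrite gamma_const0 ?expr0.
  by apply: eq_bigl => k; rewrite /inH andbA.
ring.
Qed.

Lemma cls_factor_gt0 : 0 < cls_factor.[x1].
Proof.
rewrite /cls_factor horner_prodX; apply: prodr_gt0 => k /andP [_ Jk].
by rewrite exprn_gt0 // -Yfun_Ypoly /Yfun Jk divr_gt0 ?affine_gt0 ?normr_gt0.
Qed.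

Lemma derive1_gfun_factor lambda kappa :
  gfun alpha beta lambda kappa c x1 = 0 ->
  derive1 (gfun alpha beta lambda kappa c) x1
  = cls_factor.[x1] * derive1 (qfun alpha beta lambda c r kappa) x1.
Proof.
move=> g0; have q0 : (qpoly lambda kappa).[x1] = 0.
  move: g0; rewrite gfun_factor => /eqP.
  by rewrite mulf_eq0 gt_eqF ?cls_factor_gt0 //= => /eqP.
have -> : gfun alpha beta lambda kappa c = horner (cls_factor * qpoly lambda kappa).
  by apply/funext => t; rewrite gfun_factor hornerM.
by rewrite qfunE -!derivE derivM hornerD !hornerM q0 mulr0 add0r.
Qed.

End SpeciesClasses.

Theorem lemma5p9 (R : realType) (s m : nat)
  (alpha beta : 'I_s.+1 -> 'I_m.+1 -> nat)
  (* every reaction has distinct reactant and product complexes *)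
  (Hreac : forall j : 'I_m.+1, exists i : 'I_s.+1, alpha i j != beta i j)
  (* one-dimensional stoichiometric subspace *)
  (Hdim : \rank (stoich R alpha beta) = 1%N)
  (* labelling: beta_11 - alpha_11 <> 0 *)
  (H11 : stoich R alpha beta ord0 ord0 != 0)
  (lambda : 'I_m.+1 -> R)
  (Hlam1 : lambda ord0 = 1)
  (Hlamnz : forall j, lambda j != 0)
  (Hlam : forall i j, stoich R alpha beta i j = lambda j * stoich R alpha beta i ord0)
  (cstar : 'I_s -> R)
  (* labelling: species 1..r (indices 0..r-1) represent the r distinct classes *)
  (r : nat) (Hr : (r <= s.+1)%N)
  (Hrep_distinct : forall i k : 'I_s.+1, (i < r)%N -> (k < r)%N -> i != k ->
      ~~ cls alpha beta cstar i k)
  (Hrep_cover : forall k : 'I_s.+1, exists i : 'I_s.+1,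
      (i < r)%N /\ cls alpha beta cstar i k)
  (kstar : 'I_m.+1 -> R) (Hk : forall j, 0 < kstar j)
  (xstar : 'I_s.+1 -> R)
  (Hss : steady_state alpha beta kstar xstar)
  (Hpos : positive xstar)
  (HP : in_Pc alpha beta cstar xstar) :
  Num.sg (derive1 (gfun alpha beta lambda kstar cstar) (xstar ord0))
    = Num.sg (derive1 (qfun alpha beta lambda cstar r kstar) (xstar ord0))
  /\ (stable alpha beta kstar xstar <->
      derive1 (qfun alpha beta lambda cstar r kstar) (xstar ord0) < 0).
Proof.
have xE := in_Pc_affine H11 HP.
have affine_gt0 i :
    0 < Acoef R alpha beta i * xstar ord0 + Bcoef alpha beta cstar i.
  by rewrite -xE Hpos.
have x_neq0 i : xstar i != 0 by rewrite gt_eqF ?Hpos.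
have g0 : gfun alpha beta lambda kstar cstar (xstar ord0) = 0.
  by rewrite (gfun_fvec kstar Hlam H11 HP) Hss.2.
have dgE := derive1_gfun_factor Hrep_distinct Hrep_cover affine_gt0 g0.
have P_gt0 := cls_factor_gt0 r affine_gt0.
split; first by rewrite dgE sgrM gtr0_sg // mul1r.
rewrite (stable_iff_derive1_gfun kstar Hlam H11 (Hlamnz ord0) HP x_neq0).
by rewrite dgE pmulr_rlt0.
Qed.
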